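(* Let $h>0$, let $N_t$ be a positive integer and $T=\sqrt{N_t h/4}$. For $u>0$ and $x\in[0,1]$ let $$f(u,x) = \frac{x}{\pi}\,\frac{1}{\sqrt{u}}\,\frac{e^{\sqrt{u}-T}}{e^{2(\sqrt{u}-T)}+x},\qquad I(x)=\int_0^{4T^2} f(u,x)\,du,\qquad S(x) = h\sum_{j=1}^{N_t} f(jh,x).$$ Then for every $x\in[0,e^{4-2T}]$, $$|I(x)-S(x)| < 2e^{2-T} < 15\,e^{-T}.$$ *)

From Stdlib Require Import Reals.
From Coquelicot Require Import Coquelicot.
Open Scope R_scope.

Definition Tpar (Nt : nat) (h : R) : R := sqrt (INR Nt * h / 4).

Definition fA2 (T u x : R) : R :=
  x / PI * (1 / sqrt u) * (exp (sqrt u - T) / (exp (2 * (sqrt u - T)) + x)).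

(* S(x) = h * sum_{j=1}^{Nt} f(j h, x)  (Nt >= 1) *)
Definition SA2 (Nt : nat) (h x : R) : R :=
  h * sum_f_R0 (fun j => fA2 (Tpar Nt h) (INR (S j) * h) x) (Nt - 1).

From Stdlib Require Import Reals Lra.
From Coquelicot Require Import Coquelicot.
Open Scope R_scope.

(* Both I(x) and S(x) lie in [0, 2 e^(2-T)).  For I this is explicit: u |-> (2 sqrt x / pi)
   atan (e^(sqrt u - T) / sqrt x) is a primitive of f(., x), so I < 2 sqrt x <= 2 e^(2-T).
   For S, put b_j = sqrt (j h).  Then h f(j h, x) = (b_j^2 - b_(j-1)^2) psi(b_j) / (pi b_j)
   <= (2/pi) (b_j - b_(j-1)) psi(b_j), where psi(b) = x e^(b-T) / (e^(2(b-T)) + x) is at most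
   e^(2-T) min(1, e^(2-b)).  This bound is nonincreasing in b, so the right Riemann sum is
   dominated by its integral over [0, oo), which is 3 < pi.  Finally e^2 < 7.5. *)

Lemma exp_le_inv_1_sub x : x < 1 -> exp x <= / (1 - x).
Proof.
  intros Hx. pose proof (exp_ineq1_le (- x)) as H.
  rewrite exp_Ropp in H. pose proof (exp_pos x) as Hpos.
  rewrite <- (Rinv_inv (exp x)). apply Rinv_le_contravar; lra.
Qed.

Lemma exp_double_le a b c : exp a <= b -> b * b <= c -> exp (2 * a) <= c.
Proof.
  intros Hab Hbc. replace (2 * a) with (a + a) by ring. rewrite exp_plus.
  pose proof (exp_pos a). nra.
Qed.

Lemma exp_2_lt : exp 2 < 15 / 2.
Proof.
  assert (H0 : exp (1 / 128) <= 128 / 127).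
  { replace (128 / 127) with (/ (1 - 1 / 128)) by field. apply exp_le_inv_1_sub; lra. }
  (* Each constant is the previous one squared and rounded up. *)
  pose proof (exp_double_le _ _ 1.01582 H0 ltac:(lra)) as H1.
  pose proof (exp_double_le _ _ 1.0319 H1 ltac:(lra)) as H2.
  pose proof (exp_double_le _ _ 1.06482 H2 ltac:(lra)) as H3.
  pose proof (exp_double_le _ _ 1.13385 H3 ltac:(lra)) as H4.
  pose proof (exp_double_le _ _ 1.28562 H4 ltac:(lra)) as H5.
  pose proof (exp_double_le _ _ 1.65282 H5 ltac:(lra)) as H6.
  pose proof (exp_double_le _ _ 2.73182 H6 ltac:(lra)) as H7.
  pose proof (exp_double_le _ _ 7.46285 H7 ltac:(lra)) as H8.
  replace 2 with (2 * (2 * (2 * (2 * (2 * (2 * (2 * (2 * (1 / 128)))))))))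
    at 1 by field.
  lra.
Qed.

Lemma exp_le_exp a b : a <= b -> exp a <= exp b.
Proof.
  intros Hab. destruct (Rle_lt_or_eq_dec a b Hab) as [Hlt| ->]; [|lra].
  apply Rlt_le, exp_increasing, Hlt.
Qed.

Lemma sqrt_le_exp x c : x <= exp (2 * c) -> sqrt x <= exp c.
Proof.
  intros Hx. rewrite <- (sqrt_square (exp c)) by (apply Rlt_le, exp_pos).
  apply sqrt_le_1_alt. replace (2 * c) with (c + c) in Hx by ring.
  rewrite exp_plus in Hx. exact Hx.
Qed.

Lemma is_RInt_gen_at_right_derive (f F : R -> R) (a b : R) : a < b ->
  (forall u, a < u -> is_derive F u (f u)) ->
  (forall u, a < u -> continuous f u) ->
  continuous F a ->
  is_RInt_gen f (at_right a) (at_point b) (F b - F a).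
Proof.
  intros Hab Hder Hcont HFa P HP.
  assert (HFa' : continuous (fun t => F b - F t) a).
  { apply (continuous_minus (fun _ => F b) F); [apply continuous_const | exact HFa]. }
  apply Filter_prod with (Q := fun t => a < t /\ P (F b - F t)) (R := fun t => t = b).
  - exact (filter_imp (fun t => P (F b - F t)) _ (fun t Ht Hat => conj Hat Ht) (HFa' P HP)).
  - reflexivity.
  - intros t b' [Hat HPt] ->. exists (F b - F t). split; [|exact HPt].
    assert (Hmin : a < Rmin t b) by (apply Rmin_glb_lt; lra).
    apply (is_RInt_derive F f t b).
    + intros u Hu. apply Hder. lra.
    + intros u Hu. apply Hcont. lra.
Qed.

(* For x = 0 the division by sqrt 0 = 0 yields 0, so this is the zero function, still a
   primitive of f(., 0) = 0. *)
Definition fA2_primitive (T x u : R) : R :=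
  2 * sqrt x / PI * atan (exp (sqrt u - T) / sqrt x).

Lemma continuous_fA2 T x u : 0 <= x -> 0 < u -> continuous (fun v => fA2 T v x) u.
Proof.
  intros Hx Hu. apply (@ex_derive_continuous R_AbsRing R_NormedModule).
  unfold fA2. auto_derive.
  pose proof (sqrt_lt_R0 u Hu). pose proof (exp_pos (2 * (sqrt u + - T))).
  repeat split; lra.
Qed.

Lemma continuous_fA2_primitive T x u : continuous (fA2_primitive T x) u.
Proof.
  apply (continuous_comp sqrt (fun s => 2 * sqrt x / PI * atan (exp (s - T) / sqrt x))).
  - apply continuous_sqrt.
  - apply (@ex_derive_continuous R_AbsRing R_NormedModule). auto_derive. easy.
Qed.

Lemma is_derive_fA2_primitive T x u : 0 <= x -> 0 < u ->
  is_derive (fA2_primitive T x) u (fA2 T u x).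
Proof.
  intros Hx Hu. unfold fA2_primitive. auto_derive; [exact Hu|].
  unfold fA2.
  assert (HPI : 0 < PI) by apply PI_RGT_0.
  assert (Hs : 0 < sqrt u) by (apply sqrt_lt_R0; exact Hu).
  destruct (Req_dec x 0) as [->|Hx0].
  { rewrite sqrt_0. unfold Rdiv. ring. }
  assert (Hc : 0 < sqrt x) by (apply sqrt_lt_R0; lra).
  assert (Hexp2 : exp (2 * (sqrt u - T)) = exp (sqrt u - T) * exp (sqrt u - T)).
  { rewrite <- exp_plus. f_equal. ring. }
  rewrite Hexp2. replace (sqrt u + - T) with (sqrt u - T) by ring.
  pose proof (exp_pos (sqrt u - T)).
  set (c := sqrt x) in *. rewrite <- (sqrt_sqrt x Hx). fold c.
  field. repeat split; nra.
Qed.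

Lemma atan_le a b : a <= b -> atan a <= atan b.
Proof.
  intros Hab. destruct (Rle_lt_or_eq_dec a b Hab) as [Hlt| ->]; [|lra].
  apply Rlt_le, atan_increasing, Hlt.
Qed.

Lemma fA2_primitive_diff_bound T x b : x <= exp (4 - 2 * T) ->
  0 <= fA2_primitive T x b - fA2_primitive T x 0 < 2 * exp (2 - T).
Proof.
  intros HxT. unfold fA2_primitive. rewrite sqrt_0.
  set (d := atan (exp (sqrt b - T) / sqrt x) - atan (exp (0 - T) / sqrt x)).
  assert (Hd : 0 <= d < PI).
  { unfold d. split.
    - enough (exp (0 - T) / sqrt x <= exp (sqrt b - T) / sqrt x)
        by (pose proof (atan_le _ _ H); lra).
      unfold Rdiv. apply Rmult_le_compat_r.
      + destruct (Req_dec (sqrt x) 0) as [->|Hc]; [rewrite Rinv_0; lra|].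
        apply Rlt_le, Rinv_0_lt_compat. pose proof (sqrt_pos x). lra.
      + apply exp_le_exp. pose proof (sqrt_pos b). lra.
    - pose proof (atan_bound (exp (sqrt b - T) / sqrt x)).
      pose proof (atan_bound (exp (0 - T) / sqrt x)). lra. }
  assert (Hc : sqrt x <= exp (2 - T)).
  { apply sqrt_le_exp. replace (2 * (2 - T)) with (4 - 2 * T) by ring. exact HxT. }
  pose proof (sqrt_pos x). pose proof (exp_pos (2 - T)). pose proof PI_RGT_0.
  replace (2 * sqrt x / PI * atan (exp (sqrt b - T) / sqrt x) -
           2 * sqrt x / PI * atan (exp (0 - T) / sqrt x))
    with (2 * sqrt x * d / PI) by (unfold d; field; lra).
  split.
  - apply Rmult_le_pos; [nra|]. apply Rlt_le, Rinv_0_lt_compat; lra.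
  - apply (Rmult_lt_reg_r PI); [lra|]. unfold Rdiv. rewrite Rmult_assoc, Rinv_l by lra.
    nra.
Qed.

Lemma is_RInt_gen_fA2 T x b : 0 <= x -> 0 < b ->
  is_RInt_gen (fun u => fA2 T u x) (at_right 0) (at_point b)
    (fA2_primitive T x b - fA2_primitive T x 0).
Proof.
  intros Hx Hb. apply is_RInt_gen_at_right_derive; [exact Hb| | |].
  - intros u Hu. apply is_derive_fA2_primitive; assumption.
  - intros u Hu. apply continuous_fA2; assumption.
  - apply continuous_fA2_primitive.
Qed.

Definition decay (b : R) : R := if Rle_dec b 2 then 1 else exp (2 - b).

Definition decay_primitive (s : R) : R := if Rle_dec s 2 then s else 3 - exp (2 - s).

Lemma mul_exp_neg_le d : 0 <= d -> d * exp (- d) <= 1 - exp (- d).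
Proof.
  intros Hd. pose proof (exp_ineq1_le d) as H1.
  assert (HE : exp d * exp (- d) = 1) by (rewrite <- exp_plus, Rplus_opp_r; apply exp_0).
  pose proof (exp_pos (- d)). nra.
Qed.

Lemma decay_primitive_increment a b : a <= b ->
  (b - a) * decay b <= decay_primitive b - decay_primitive a.
Proof.
  intros Hab. unfold decay, decay_primitive.
  destruct (Rle_dec b 2) as [Hb|Hb]; destruct (Rle_dec a 2) as [Ha|Ha]; try lra.
  - pose proof (mul_exp_neg_le (b - 2)) as K.
    replace (- (b - 2)) with (2 - b) in K by ring.
    assert (exp (2 - b) <= 1) by (rewrite <- exp_0; apply exp_le_exp; lra).
    pose proof (exp_pos (2 - b)). nra.
  - pose proof (mul_exp_neg_le (b - a)) as K.
    assert (E : exp (2 - b) = exp (2 - a) * exp (- (b - a))).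
    { rewrite <- exp_plus. f_equal. ring. }
    rewrite E. pose proof (exp_pos (2 - a)). nra.
Qed.

Lemma decay_primitive_lt_3 s : decay_primitive s < 3.
Proof.
  unfold decay_primitive. destruct (Rle_dec s 2); [lra|].
  pose proof (exp_pos (2 - s)). lra.
Qed.

Lemma fA2_numerator_le_decay T x b : 0 <= x -> x <= exp (4 - 2 * T) ->
  0 <= x * (exp (b - T) / (exp (2 * (b - T)) + x)) <= exp (2 - T) * decay b.
Proof.
  intros Hx HxT.
  assert (HE2 : exp (2 * (b - T)) = exp (b - T) * exp (b - T)).
  { rewrite <- exp_plus. f_equal. ring. }
  rewrite HE2. set (E := exp (b - T)).
  assert (HE : 0 < E) by apply exp_pos.
  assert (HD : 0 < E * E + x) by nra.
  replace (x * (E / (E * E + x))) with (x * E / (E * E + x)) by (field; lra).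
  split; [unfold Rdiv; apply Rle_mult_inv_pos; nra|].
  apply Rle_div_l; [exact HD|].
  unfold decay. destruct (Rle_dec b 2) as [Hb|Hb].
  - assert (x * E <= x * exp (2 - T)) by (apply Rmult_le_compat_l, exp_le_exp; lra).
    pose proof (exp_pos (2 - T)). nra.
  - assert (HEE : exp (2 - T) * exp (2 - b) * (E * E) = exp (4 - 2 * T) * E).
    { unfold E. rewrite <- !exp_plus. f_equal. ring. }
    assert (x * E <= exp (4 - 2 * T) * E) by (apply Rmult_le_compat_r; lra).
    assert (0 <= exp (2 - T) * exp (2 - b) * x)
      by (apply Rmult_le_pos; [apply Rmult_le_pos; apply Rlt_le, exp_pos | exact Hx]).
    lra.
Qed.

Lemma sqr_sub_div_le a b : 0 < b -> (b * b - a * a) / b <= 2 * (b - a).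
Proof.
  intros Hb. apply Rle_div_l; [exact Hb|].
  pose proof (Rle_0_sqr (b - a)). unfold Rsqr in *. lra.
Qed.

Lemma fA2_step_bound h T x k : 0 < h -> 0 <= x -> x <= exp (4 - 2 * T) ->
  0 <= h * fA2 T (INR (S k) * h) x <=
  2 / PI * exp (2 - T) *
    (decay_primitive (sqrt (INR (S k) * h)) - decay_primitive (sqrt (INR k * h))).
Proof.
  intros Hh Hx HxT.
  assert (Hk := pos_INR k). rewrite S_INR.
  set (b := sqrt ((INR k + 1) * h)). set (a := sqrt (INR k * h)).
  assert (Hb : 0 < b) by (apply sqrt_lt_R0; nra).
  assert (Hab : a <= b) by (apply sqrt_le_1_alt; nra).
  assert (Hhab : h = b * b - a * a).
  { unfold a, b. rewrite !sqrt_sqrt by nra. ring. }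
  set (psi := x * (exp (b - T) / (exp (2 * (b - T)) + x))).
  destruct (fA2_numerator_le_decay T x b Hx HxT) as [Hpsi0 Hpsi]. fold psi in Hpsi0, Hpsi.
  pose proof (sqr_sub_div_le a b Hb) as Hstep. rewrite <- Hhab in Hstep.
  pose proof (decay_primitive_increment a b Hab) as Hincr.
  assert (Hdecay : 0 <= decay b).
  { unfold decay. destruct (Rle_dec b 2); [lra | apply Rlt_le, exp_pos]. }
  assert (HPI : 0 < PI) by apply PI_RGT_0.
  pose proof (exp_pos (2 - T)) as HK.
  assert (Hhb : 0 <= h / b) by (apply Rlt_le, Rdiv_lt_0_compat; assumption).
  replace (h * fA2 T ((INR k + 1) * h) x) with (h / b * psi / PI)
    by (unfold fA2, psi; fold b; pose proof (exp_pos (2 * (b - T))); field; lra).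
  replace (2 / PI * exp (2 - T) * (decay_primitive b - decay_primitive a))
    with (2 * exp (2 - T) * (decay_primitive b - decay_primitive a) / PI) by (field; lra).
  split.
  - apply Rdiv_le_0_compat; [apply Rmult_le_pos|]; assumption.
  - unfold Rdiv. apply Rmult_le_compat_r; [apply Rlt_le, Rinv_0_lt_compat, HPI|].
    apply Rle_trans with (2 * (b - a) * (exp (2 - T) * decay b)).
    + apply Rmult_le_compat; assumption.
    + replace (2 * (b - a) * (exp (2 - T) * decay b))
        with (2 * exp (2 - T) * ((b - a) * decay b)) by ring.
      apply Rmult_le_compat_l; lra.
Qed.

Lemma sum_f_R0_le_telescope (t g : nat -> R) n :
  (forall k, 0 <= t k <= g (S k) - g k) -> 0 <= sum_f_R0 t n <= g (S n) - g O.
Proof.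
  intros Ht. induction n as [|n IH]; simpl; [apply Ht|].
  pose proof (Ht (S n)). lra.
Qed.

Lemma fA2_riemann_sum_bound h T x n : 0 < h -> 0 <= x -> x <= exp (4 - 2 * T) ->
  0 <= h * sum_f_R0 (fun j => fA2 T (INR (S j) * h) x) n < 2 * exp (2 - T).
Proof.
  intros Hh Hx HxT.
  set (c := 2 / PI * exp (2 - T)).
  set (g := fun k => c * decay_primitive (sqrt (INR k * h))).
  assert (Hsum : 0 <= h * sum_f_R0 (fun j => fA2 T (INR (S j) * h) x) n <= g (S n) - g O).
  { rewrite scal_sum. apply sum_f_R0_le_telescope. intros k.
    rewrite Rmult_comm. unfold g. rewrite <- Rmult_minus_distr_l.
    apply fA2_step_bound; assumption. }
  assert (Hg0 : g O = 0).
  { unfold g, decay_primitive. simpl INR. rewrite Rmult_0_l, sqrt_0.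
    destruct (Rle_dec 0 2); lra. }
  assert (Hg : g (S n) < 2 * exp (2 - T)).
  { unfold g, c. pose proof (decay_primitive_lt_3 (sqrt (INR (S n) * h))).
    pose proof PI2_3_2. pose proof (exp_pos (2 - T)).
    apply Rmult_lt_reg_l with PI; [lra|].
    replace (PI * (2 / PI * exp (2 - T) * decay_primitive (sqrt (INR (S n) * h))))
      with (2 * exp (2 - T) * decay_primitive (sqrt (INR (S n) * h))) by (field; lra).
    nra. }
  lra.
Qed.

Theorem lemmaA2 (h : R) (Nt : nat) (x : R) :
  0 < h -> (1 <= Nt)%nat ->
  0 <= x -> x <= 1 -> x <= exp (4 - 2 * Tpar Nt h) ->
  exists I : R,
    is_RInt_gen (fun u => fA2 (Tpar Nt h) u x) (at_right 0)
      (at_point (4 * (Tpar Nt h) ^ 2)) I /\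
    Rabs (I - SA2 Nt h x) < 2 * exp (2 - Tpar Nt h) /\
    2 * exp (2 - Tpar Nt h) < 15 * exp (- Tpar Nt h).
Proof.
  intros Hh HNt Hx _ HxT.
  unfold SA2. set (T := Tpar Nt h) in *.
  assert (HT : 0 < T).
  { apply sqrt_lt_R0, Rdiv_lt_0_compat; [|lra].
    apply Rmult_lt_0_compat; [apply lt_0_INR, HNt | exact Hh]. }
  pose proof (fA2_primitive_diff_bound T x (4 * T ^ 2) HxT) as HI.
  pose proof (fA2_riemann_sum_bound h T x (Nt - 1) Hh Hx HxT) as HS.
  exists (fA2_primitive T x (4 * T ^ 2) - fA2_primitive T x 0). repeat split.
  - apply is_RInt_gen_fA2; [exact Hx | nra].
  - apply Rabs_def1; lra.
  - replace (exp (2 - T)) with (exp 2 * exp (- T)) by (rewrite <- exp_plus; f_equal; ring).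
    pose proof exp_2_lt. pose proof (exp_pos (- T)). nra.
Qed.
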